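(* Let $(A,\alpha_A)$ be a Hom-algebra, $(H,\alpha_H)$ a Hom-coalgebra, $\Phi:H\otimes A\to A\otimes H$ a Hom-entwining map, and $\varphi:{A^*}^{cop}\otimes H\to H\otimes{A^*}^{cop}$ the corresponding Hom-cotwistor (determined by $\sum f(a_\Phi)h^\Phi=\sum f^\varphi(a)h^\varphi$). Let $n\in\mathbb Z$. Then the category $\mathcal M(\Phi)^H_A(n)$ of $n$-th Hom-entwined modules is isomorphic to the category $\mathcal B(n)$ of $\ddot\varphi(n)$-bicomodules for $B={A^*}^{cop}$.
   Context: $\Bbbk$ field of characteristic $0$; vector spaces finite-dimensional; all structure maps $\alpha$ are bijective. Hom-algebra: $\alpha_A(a)(bc)=(ab)\alpha_A(c)$, $\alpha_A(1_A)=1_A$, $1_Aa=a1_A=\alpha_A(a)$. Hom-coalgebra: $\varepsilon\alpha=\varepsilon$, $\alpha(c_1)\otimes\Delta(c_2)=\Delta(c_1)\otimes\alpha(c_2)$, $\varepsilon(c_1)c_2=c_1\varepsilon(c_2)=\alpha(c)$. ${A^*}^{cop}$: Hom-coalgebra on $A^*$ with $\overline\varepsilon(f)=f(1_A)$, $\overline\Delta(f)(x\otimes y)=f(\alpha_A^{-2}(yx))$, $\alpha(f)=f\circ\alpha_A^{-1}$. A Hom-entwining map is a linear $\Phi(h\otimes a)=\sum a_\Phi\otimes h^\Phi$ with $(\alpha_A\otimes\alpha_H)\Phi=\Phi(\alpha_H\otimes\alpha_A)$ and (E1) $\sum a_\Phi b_\Psi\otimes\alpha_H((h^\Phi)^\Psi)=\Phi(\alpha_H(h)\otimes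 ab)$ (where $\Psi=\Phi$ applied to $h^\Phi\otimes b$); (E2) $(\Phi\otimes\mathrm{id}_H)(\mathrm{id}_H\otimes\Phi)(\Delta_H(h)\otimes\alpha_A(a))=(\alpha_A\otimes\Delta_H)\Phi(h\otimes a)$; (E3) $(\mathrm{id}\otimes\varepsilon_H)\Phi(h\otimes a)=\varepsilon_H(h)a$; (E4) $\Phi(h\otimes1_A)=1_A\otimes h$. The corresponding $\varphi$ is then a Hom-cotwistor. A right $A$-Hom-module is $(U,\alpha_U)$ with $u\otimes a\mapsto u\cdot a$ commuting with the $\alpha$'s, $(u\cdot a)\cdot\alpha_A(b)=\alpha_U(u)\cdot(ab)$, $u\cdot1_A=\alpha_U(u)$. A right $H$-Hom-comodule is $(U,\alpha_U)$ with $\rho(u)=u_{(0)}\otimes u_{(1)}$ commuting with the $\alpha$'s, $\alpha_U(u_{(0)})\otimes\Delta(u_{(1)})=\rho(u_{(0)})\otimes\alpha_H(u_{(1)})$, $\varepsilon(u_{(1)})u_{(0)}=\alpha_U(u)$. $\mathcal M(\Phi)^H_A(n)$: objects are right $A$-Hom-modules and right $H$-Hom-comodules with $\rho(u\cdot a)=\sum u_{(0)}\cdot\alpha_A(a_\Phi)\otimes\alpha_H^{-n}\big((\alpha_H^{n+1}(u_{(1)}))^\Phi\big)$, where $\Phi$ is applied to $\alpha_H^{n+1}(u_{(1)})\otimes a$; morphisms are $A$-linear $H$-colinear maps commuting with the $\alpha$'s. For Hom-coalgebras $B,H$ and a Hom-cotwistor $\varphi(b\otimes h)=\sum h^\varphi\otimes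 b^\varphi$, $\mathcal B(n)$ has objects $(U,\alpha_U)$ that are right $B$-Hom-comodules ($u\mapsto u_{[0]}\otimes u_{[1]}$) and right $H$-Hom-comodules with $\sum u_{[0](0)}\otimes u_{[0](1)}\otimes u_{[1]}=\sum u_{(0)[0]}\otimes\alpha_H(u_{(1)})^\varphi\otimes\alpha_B^n((\alpha_B^{-n-1}(u_{(0)[1]}))^\varphi)$, morphisms $B$- and $H$-colinear maps commuting with the $\alpha$'s. *)

From HB Require Import structures.
From mathcomp Require Import all_boot all_algebra.
Set Implicit Arguments.
Unset Strict Implicit.
Unset Printing Implicit Defensive.
Import GRing.Theory.
Local Open Scope ring_scope.

(* Concrete categories: morphisms X -> Y are maps between the carriers that *)
(* satisfy a predicate; identity = id, composition = function composition.  *)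
Record ccat := CCat {
  cob :> Type;
  ccar : cob -> Type;
  chom : forall X Y : cob, (ccar X -> ccar Y) -> Prop }.

Record cfunctor (C D : ccat) := CFunctor {
  fob : C -> D;
  fmap : forall (X Y : C) (f : ccar X -> ccar Y), chom f ->
           ccar (fob X) -> ccar (fob Y);
  fmap_hom : forall (X Y : C) (f : ccar X -> ccar Y) (hf : chom f),
           chom (fmap hf);
  fmap_id : forall (X : C) (h : chom (@id (ccar X))), fmap h =1 id;
  fmap_comp : forall (X Y Z : C) (f : ccar X -> ccar Y) (g : ccar Y -> ccar Z)
      (hf : chom f) (hg : chom g) (hgf : chom (g \o f)),
      fmap hgf =1 fmap hg \o fmap hf }.

Arguments fob {C D} c _ : rename.
Arguments fmap {C D} c {X Y f} _ _ : rename.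
Arguments fmap_hom {C D} c {X Y f} _ : rename.

Definition castf (C : ccat) (X X' Y Y' : C) (eX : X = X') (eY : Y = Y')
  (f : ccar X -> ccar Y) : ccar X' -> ccar Y' :=
  match eX in _ = X0 return ccar X0 -> ccar Y' with
  | erefl => match eY in _ = Y0 return ccar X -> ccar Y0 with
             | erefl => f end end.

Definition inverse_functors (C D : ccat) (F : cfunctor C D) (G : cfunctor D C) :=
  exists e : forall X : C, fob G (fob F X) = X,
    forall (X Y : C) (f : ccar X -> ccar Y) (hf : chom f),
      castf (e X) (e Y) (fmap G (fmap_hom F hf)) =1 f.

Definition cat_iso (C D : ccat) : Prop :=
  exists (F : cfunctor C D) (G : cfunctor D C),
    inverse_functors F G /\ inverse_functors G F.

(* The fixed finite-dimensional spaces A, H are k^m, k^n (row vectors).     *)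
(* A tensor product X (x) k^n is represented by {ffun 'I_n -> X}: the       *)
(* element sum_j t j (x) e_j, e_j the standard basis.  So the LAST tensor   *)
(* factor is always a coordinate space, and X (x) Y (x) k^n = ((X(x)Y)(x)k^n)*)
Section Tensors.
Variable k : fieldType.

Definition ev n (j : 'I_n) : 'rV[k]_n := delta_mx 0 j.

Definition tens (V : lmodType k) n (v : V) (h : 'rV[k]_n) : {ffun 'I_n -> V} :=
  [ffun j => h 0 j *: v].

(* Sweedler sum:  for t = sum x_j (x) e_j and F bilinear,
   lift t F = sum F(t_(1), t_(2)) = sum_j F (t j) e_j *)
Definition lift (V W : lmodType k) n (t : {ffun 'I_n -> V})
  (F : V -> 'rV[k]_n -> W) : W := \sum_(j < n) F (t j) (ev j).

Definition lin (U V : lmodType k) (f : U -> V) :=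
  forall (a : k) x y, f (a *: x + y) = a *: f x + f y.
Definition linf (U : lmodType k) (f : U -> k) :=
  forall (a : k) x y, f (a *: x + y) = a * f x + f y.
Definition bilin (U V W : lmodType k) (f : U -> V -> W) :=
  (forall x, lin (f x)) /\ (forall y, lin (f^~ y)).

Definition zit (V : Type) (f g : V -> V) (z : int) : V -> V :=
  match z with Posz p => iter p f | Negz p => iter p.+1 g end.

(* pairing A^* x A -> k, A^* = k^m via the dual basis *)
Definition pair m (f a : 'rV[k]_m) : k := \sum_(i < m) f 0 i * a 0 i.

End Tensors.

Section HomStructures.
Variable k : fieldType.

Definition isHomAlgebra m (mul : 'rV[k]_m -> 'rV[k]_m -> 'rV[k]_m)
  (one : 'rV[k]_m) (al alinv : 'rV[k]_m -> 'rV[k]_m) :=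
  [/\ bilin mul, lin al, cancel al alinv, cancel alinv al &
    [/\ forall a b c, mul (al a) (mul b c) = mul (mul a b) (al c),
      al one = one &
      forall a, mul one a = al a /\ mul a one = al a]].

Definition isHomCoalgebra n (Delta : 'rV[k]_n -> {ffun 'I_n -> 'rV[k]_n})
  (eps : 'rV[k]_n -> k) (al alinv : 'rV[k]_n -> 'rV[k]_n) :=
  [/\ lin Delta, linf eps, lin al, cancel al alinv & cancel alinv al] /\
  [/\ forall c, eps (al c) = eps c,
      (* alpha(c1) (x) Delta(c2) = Delta(c1) (x) alpha(c2) *)
      forall c, lift (Delta c) (fun c1 c2 =>
                  lift (Delta c2) (fun d1 d2 => tens (tens (al c1) d1) d2))
                = lift (Delta c) (fun c1 c2 => tens (Delta c1) (al c2)) &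
      forall c, lift (Delta c) (fun c1 c2 => eps c1 *: c2) = al c /\
                lift (Delta c) (fun c1 c2 => eps c2 *: c1) = al c].

Definition isHomModule (U : lmodType k) m (mul : 'rV[k]_m -> 'rV[k]_m -> 'rV[k]_m)
  (one : 'rV[k]_m) (alA : 'rV[k]_m -> 'rV[k]_m) (alU : U -> U)
  (act : U -> 'rV[k]_m -> U) :=
  [/\ bilin act,
      forall u a, alU (act u a) = act (alU u) (alA a),
      forall u a b, act (act u a) (alA b) = act (alU u) (mul a b) &
      forall u, act u one = alU u].

Definition isHomComodule (U : lmodType k) n
  (Delta : 'rV[k]_n -> {ffun 'I_n -> 'rV[k]_n}) (eps : 'rV[k]_n -> k)
  (alC : 'rV[k]_n -> 'rV[k]_n) (alU : U -> U) (rho : U -> {ffun 'I_n -> U}) :=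
  [/\ lin rho,
      forall u, rho (alU u) = lift (rho u) (fun u0 u1 => tens (alU u0) (alC u1)),
      (* alU(u0) (x) Delta(u1) = rho(u0) (x) alC(u1) *)
      forall u, lift (rho u) (fun u0 u1 =>
                  lift (Delta u1) (fun d1 d2 => tens (tens (alU u0) d1) d2))
                = lift (rho u) (fun u0 u1 => tens (rho u0) (alC u1)) &
      forall u, lift (rho u) (fun u0 u1 => eps u1 *: u0) = alU u].

Definition colinear (U V : lmodType k) n (rhoU : U -> {ffun 'I_n -> U})
  (rhoV : V -> {ffun 'I_n -> V}) (f : U -> V) :=
  forall u, rhoV (f u) = lift (rhoU u) (fun u0 u1 => tens (f u0) u1).

Definition isHomEntwining m n (mulA : 'rV[k]_m -> 'rV[k]_m -> 'rV[k]_m)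
  (oneA : 'rV[k]_m) (alA : 'rV[k]_m -> 'rV[k]_m)
  (Delta : 'rV[k]_n -> {ffun 'I_n -> 'rV[k]_n}) (eps : 'rV[k]_n -> k)
  (alH : 'rV[k]_n -> 'rV[k]_n)
  (Phi : 'rV[k]_n -> 'rV[k]_m -> {ffun 'I_n -> 'rV[k]_m}) :=
  bilin Phi /\
  [/\ forall h a, lift (Phi h a) (fun a' h' => tens (alA a') (alH h'))
                  = Phi (alH h) (alA a),
      forall h a b,
        lift (Phi h a) (fun a' h' =>
          lift (Phi h' b) (fun b' h'' => tens (mulA a' b') (alH h'')))
        = Phi (alH h) (mulA a b),
      forall h a,
        lift (Delta h) (fun h1 h2 =>
          lift (Phi h2 (alA a)) (fun a' h2' => tens (Phi h1 a') h2'))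
        = lift (Phi h a) (fun a' h' =>
            lift (Delta h') (fun d1 d2 => tens (tens (alA a') d1) d2)),
      forall h a, lift (Phi h a) (fun a' h' => eps h' *: a') = eps h *: a &
      forall h, Phi h oneA = tens oneA h].

(* B = (A^* )^cop on k^m (coordinates w.r.t. the dual basis) *)
Definition DeltaB m (mul : 'rV[k]_m -> 'rV[k]_m -> 'rV[k]_m)
  (alinv : 'rV[k]_m -> 'rV[k]_m) (f : 'rV[k]_m) : {ffun 'I_m -> 'rV[k]_m} :=
  (* Delta(f)(e_i (x) e_j) = f(alpha^-2 (e_j e_i)) *)
  [ffun j => \row_i pair f (alinv (alinv (mul (ev k j) (ev k i))))].
Definition epsB m (one : 'rV[k]_m) (f : 'rV[k]_m) : k := pair f one.
Definition alB m (alinv : 'rV[k]_m -> 'rV[k]_m) (f : 'rV[k]_m) : 'rV[k]_m :=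
  \row_i pair f (alinv (ev k i)).
Definition alBinv m (al : 'rV[k]_m -> 'rV[k]_m) (f : 'rV[k]_m) : 'rV[k]_m :=
  \row_i pair f (al (ev k i)).

Definition corresponding_cotwistor m n
  (Phi : 'rV[k]_n -> 'rV[k]_m -> {ffun 'I_n -> 'rV[k]_m})
  (phi : 'rV[k]_m -> 'rV[k]_n -> {ffun 'I_m -> 'rV[k]_n}) :=
  forall f a h,
    lift (Phi h a) (fun a' h' => pair f a' *: h')
    = lift (phi f h) (fun h' f' => pair f' a *: h').

End HomStructures.

Unset Implicit Arguments.

Section EntwinedModules.
Variables (k : fieldType) (m n : nat).
Variables (mulA : 'rV[k]_m -> 'rV[k]_m -> 'rV[k]_m) (oneA : 'rV[k]_m)
  (alA alAinv : 'rV[k]_m -> 'rV[k]_m).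
Variables (DeltaH : 'rV[k]_n -> {ffun 'I_n -> 'rV[k]_n}) (epsH : 'rV[k]_n -> k)
  (alH alHinv : 'rV[k]_n -> 'rV[k]_n).
Variable Phi : 'rV[k]_n -> 'rV[k]_m -> {ffun 'I_n -> 'rV[k]_m}.
Variable z : int.

Record EMod := {
  em_U : vectType k;
  em_al : em_U -> em_U;
  em_act : em_U -> 'rV[k]_m -> em_U;
  em_rho : em_U -> {ffun 'I_n -> em_U};
  em_ax :
    [/\ lin em_al, bijective em_al,
        isHomModule mulA oneA alA em_al em_act,
        isHomComodule DeltaH epsH alH em_al em_rho &
        (* rho(u.a) = sum u0.alA(a_Phi) (x) alH^-z((alH^(z+1)(u1))^Phi) *)
        forall u a, em_rho (em_act u a)
          = lift (em_rho u) (fun u0 u1 =>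
              lift (Phi (zit alH alHinv (z + 1) u1) a) (fun a' h' =>
                tens (em_act u0 (alA a')) (zit alH alHinv (- z) h')))] }.

Definition EMod_hom (X Y : EMod) (f : em_U X -> em_U Y) : Prop :=
  [/\ lin f, forall u, f (em_al X u) = em_al Y (f u),
      forall u a, f (em_act X u a) = em_act Y (f u) a &
      colinear (em_rho X) (em_rho Y) f].

Definition EModCat : ccat := @CCat EMod (fun X => em_U X : Type) EMod_hom.

End EntwinedModules.

Section Bicomodules.
Variables (k : fieldType) (m n : nat).
Variables (mulA : 'rV[k]_m -> 'rV[k]_m -> 'rV[k]_m) (oneA : 'rV[k]_m)
  (alA alAinv : 'rV[k]_m -> 'rV[k]_m).
Variables (DeltaH : 'rV[k]_n -> {ffun 'I_n -> 'rV[k]_n}) (epsH : 'rV[k]_n -> k)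
  (alH alHinv : 'rV[k]_n -> 'rV[k]_n).
Variable phi : 'rV[k]_m -> 'rV[k]_n -> {ffun 'I_m -> 'rV[k]_n}.
Variable z : int.

Local Notation aB := (alB alAinv).
Local Notation aBinv := (alBinv alA).

Record BiCom := {
  bc_U : vectType k;
  bc_al : bc_U -> bc_U;
  bc_rhoB : bc_U -> {ffun 'I_m -> bc_U};
  bc_rho : bc_U -> {ffun 'I_n -> bc_U};
  bc_ax :
    [/\ lin bc_al, bijective bc_al,
        isHomComodule (DeltaB mulA alAinv) (epsB oneA) aB bc_al bc_rhoB,
        isHomComodule DeltaH epsH alH bc_al bc_rho &
        (* sum u[0](0) (x) u[0](1) (x) u[1]
           = sum u(0)[0] (x) alH(u(1))^phi (x) alB^z((alB^(-z-1)(u(0)[1]))^phi) *)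
        forall u,
          lift (bc_rhoB u) (fun x b => tens (bc_rho x) b)
          = lift (bc_rho u) (fun u0 u1 =>
              lift (bc_rhoB u0) (fun u00 b =>
                lift (phi (zit aB aBinv (- z - 1) b) (alH u1)) (fun h' b' =>
                  tens (tens u00 h') (zit aB aBinv z b'))))] }.

Definition BiCom_hom (X Y : BiCom) (f : bc_U X -> bc_U Y) : Prop :=
  [/\ lin f, forall u, f (bc_al X u) = bc_al Y (f u),
      colinear (bc_rhoB X) (bc_rhoB Y) f &
      colinear (bc_rho X) (bc_rho Y) f].

Definition BiComCat : ccat := @CCat BiCom (fun X => bc_U X : Type) BiCom_hom.

End Bicomodules.

Arguments EModCat {k m n}.
Arguments BiComCat {k m n}.

From Pilot Require Import Defs.
From HB Require Import structures.
From mathcomp Require Import all_boot all_algebra zify.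
From Stdlib Require FunctionalExtensionality ProofIrrelevance.
(* Re-imported so that [lift] means Defs.lift rather than fintype.lift. *)
Import Pilot.Defs.
Set Implicit Arguments.
Unset Strict Implicit.
Unset Printing Implicit Defensive.
Import GRing.Theory.
Local Open Scope ring_scope.

(* Since A is finite dimensional, a right A-action u.a on U is the same thing
   as a right B-coaction u |-> sum_i u.e_i (x) e^i with B = (A^* )^cop, and a
   linear map is A-linear iff it is B-colinear; the Hom-module axioms turn
   into the Hom-comodule axioms for B (the co-opposite coproduct and the
   alpha_A^-2 twist of DeltaB absorb the order of the factors and the
   alpha's).  Contracting the third tensor factor of the bicomodule
   compatibility against a in A and using the defining property of the
   cotwistor phi, together with the naturality of Phi with respect to all
   integer powers of alpha_A and alpha_H, yields exactly the entwined module
   compatibility.  Both translations keep the carrier, alpha and H-coaction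
   and are mutually inverse, so with the identity on morphisms they form an
   isomorphism of categories. *)

Section LinearMaps.
Variable k : fieldType.
Implicit Types U V W : lmodType k.

Lemma lin0 U V (f : U -> V) : lin f -> f 0 = 0.
Proof.
move=> h; have e := h 1 0 0; rewrite !scale1r addr0 in e.
have : f 0 + f 0 - f 0 = f 0 - f 0 by rewrite -e.
by rewrite addrK subrr.
Qed.

Lemma linD U V (f : U -> V) : lin f -> forall x y, f (x + y) = f x + f y.
Proof. by move=> h x y; have := h 1 x y; rewrite !scale1r. Qed.

Lemma linZ U V (f : U -> V) : lin f -> forall a x, f (a *: x) = a *: f x.
Proof. by move=> h a x; have := h a x 0; rewrite !addr0 (lin0 h) addr0. Qed.

Lemma lin_sum U V (f : U -> V) (I : Type) (r : seq I) (P : pred I) (F : I -> U) :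
  lin f -> f (\sum_(i <- r | P i) F i) = \sum_(i <- r | P i) f (F i).
Proof.
move=> h; elim/big_rec2: _ => [|i y1 y2 _ <-]; first exact: lin0.
by rewrite (linD h).
Qed.

Lemma lin_comp U V W (f : V -> W) (g : U -> V) : lin f -> lin g -> lin (f \o g).
Proof. by move=> hf hg a x y /=; rewrite hg hf. Qed.

Lemma lin_inv U (f g : U -> U) : lin f -> cancel f g -> cancel g f -> lin g.
Proof. by move=> hf fK gK a x y; apply: (can_inj fK); rewrite hf !gK. Qed.

Lemma lin_iter U (f : U -> U) p : lin f -> lin (iter p f).
Proof. by move=> hf; elim: p => //= p IH a x y /=; rewrite IH hf. Qed.

Lemma lin_zit U (f g : U -> U) t : lin f -> lin g -> lin (zit f g t).
Proof. by move=> hf hg; case: t => p; apply: lin_iter. Qed.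

Lemma linf_comp U V (g : V -> k) (f : U -> V) : linf g -> lin f -> linf (g \o f).
Proof. by move=> hg hf a x y /=; rewrite hf hg. Qed.

Lemma evE m (j i : 'I_m) : ev k j 0 i = (j == i)%:R.
Proof. by rewrite /ev mxE eqxx andTb eq_sym. Qed.

Lemma sum_evE V m (j : 'I_m) (F : 'I_m -> V) : \sum_(i < m) ev k j 0 i *: F i = F j.
Proof.
rewrite (bigD1 j) //= evE eqxx scale1r big1 ?addr0 // => i /negbTE.
by rewrite evE eq_sym => ->; rewrite scale0r.
Qed.

Lemma sum_ev_coordE V m (i : 'I_m) (F : 'I_m -> V) :
  \sum_(j < m) ev k j 0 i *: F j = F i.
Proof. by rewrite -(sum_evE i F); apply: eq_bigr => j _; rewrite !evE eq_sym. Qed.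

Lemma lin_sum_ev V m (g : 'rV[k]_m -> V) (x : 'rV[k]_m) :
  lin g -> \sum_(j < m) x 0 j *: g (ev k j) = g x.
Proof.
move=> hg; rewrite [in RHS](row_sum_delta x) (lin_sum _ _ _ hg).
by apply: eq_bigr => j _; rewrite (linZ hg).
Qed.

Lemma lin_eq_ev V m (g1 g2 : 'rV[k]_m -> V) :
  lin g1 -> lin g2 -> (forall j, g1 (ev k j) = g2 (ev k j)) -> g1 =1 g2.
Proof.
move=> h1 h2 e x; rewrite -(lin_sum_ev x h1) -(lin_sum_ev x h2).
by apply: eq_bigr => j _; rewrite e.
Qed.

Lemma bilin_eq_ev V m p (g1 g2 : 'rV[k]_m -> 'rV[k]_p -> V) :
  bilin g1 -> bilin g2 -> (forall i j, g1 (ev k i) (ev k j) = g2 (ev k i) (ev k j)) ->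
  forall x y, g1 x y = g2 x y.
Proof.
move=> [h1x h1y] [h2x h2y] e x y.
have ey i : g1 (ev k i) y = g2 (ev k i) y by apply: lin_eq_ev => // j; apply: e.
exact: (lin_eq_ev (g1 := g1^~ y) (g2 := g2^~ y)).
Qed.

Lemma pair_evl m (j : 'I_m) (x : 'rV[k]_m) : pair (ev k j) x = x 0 j.
Proof. exact: (sum_evE (V := k^o) j (fun i => x 0 i)). Qed.

Lemma linf_pair m (f : 'rV[k]_m) : linf (pair f).
Proof.
move=> a x y; rewrite /pair mulr_sumr -big_split /=; apply: eq_bigr => i _.
by rewrite !mxE mulrDr mulrCA.
Qed.

Lemma pair_row_linf m (g : 'rV[k]_m -> k) (a : 'rV[k]_m) :
  linf g -> pair (\row_i g (ev k i)) a = g a.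
Proof.
move=> hg; rewrite /pair -(lin_sum_ev a (hg : lin (g : _ -> k^o))).
by apply: eq_bigr => i _; rewrite mxE mulrC.
Qed.

End LinearMaps.

Lemma iter_cancel (T : Type) (f g : T -> T) p : cancel f g -> cancel (iter p f) (iter p g).
Proof. by move=> fK; elim: p => //= p IH x; rewrite iterSr fK IH. Qed.

Section IntegerIterates.
Variables (T : Type) (f g : T -> T).
Hypotheses (fK : cancel f g) (gK : cancel g f).

Lemma zitN t : zit f g (- t) =1 zit g f t.
Proof.
by move=> x; case: t => [[|p]|p].
Qed.

Lemma zitK t : cancel (zit f g t) (zit g f t).
Proof. by case: t => p /=; apply: iter_cancel. Qed.

Lemma zitSr t x : zit f g (t + 1) x = zit f g t (f x).
Proof.
case: t => [p|[|p]].
- have -> : Posz p + 1 = Posz p.+1 by lia.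
  by rewrite /= -iterS iterSr.
- have -> : Negz 0 + 1 = 0 by lia.
  by rewrite /= fK.
have -> : Negz p.+1 + 1 = Negz p by lia.
by rewrite /= -[g (iter p g (f x))]iterS iterSr fK.
Qed.

Lemma zitS t x : zit f g (t + 1) x = f (zit f g t x).
Proof.
case: t => [p|[|p]].
- by have -> : Posz p + 1 = Posz p.+1 by lia.
- have -> : Negz 0 + 1 = 0 by lia.
  by rewrite /= gK.
have -> : Negz p.+1 + 1 = Negz p by lia.
by rewrite /= gK.
Qed.

End IntegerIterates.

Section SweedlerSums.
Variable k : fieldType.
Implicit Types V W X : lmodType k.

Lemma eq_lift V W n (t : {ffun 'I_n -> V}) (F G : V -> 'rV[k]_n -> W) :
  (forall x y, F x y = G x y) -> lift t F = lift t G.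
Proof. by move=> e; apply: eq_bigr => j _; rewrite e. Qed.

Lemma tensE V n (v : V) (h : 'rV[k]_n) j : tens v h j = h 0 j *: v.
Proof. by rewrite ffunE. Qed.

Lemma lift_ffunE V W (I : finType) n (t : {ffun 'I_n -> V})
    (F : V -> 'rV[k]_n -> {ffun I -> W}) i :
  lift t F i = lift t (fun x y => F x y i).
Proof. by rewrite /lift sum_ffunE. Qed.

Lemma lift_coord V W n (t : {ffun 'I_n -> V}) (G : V -> W) i :
  lift t (fun x y => y 0 i *: G x) = G (t i).
Proof. exact: sum_ev_coordE. Qed.

Lemma lift_tens_f V W n (t : {ffun 'I_n -> V}) (f : V -> W) :
  lift t (fun x y => tens (f x) y) = [ffun i => f (t i)].
Proof.
apply/ffunP => i; rewrite lift_ffunE ffunE.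
under eq_lift do rewrite tensE.
exact: lift_coord.
Qed.

Lemma lift_tens_id V n (t : {ffun 'I_n -> V}) : lift t (fun x y => tens x y) = t.
Proof. by rewrite (lift_tens_f t id); apply/ffunP => i; rewrite ffunE. Qed.

Lemma lift_lin V W X n (t : {ffun 'I_n -> V}) (F : V -> 'rV[k]_n -> W) (g : W -> X) :
  lin g -> g (lift t F) = lift t (fun x y => g (F x y)).
Proof. exact: lin_sum. Qed.

Lemma lift_lift V W X n p (t : {ffun 'I_n -> V})
    (G : V -> 'rV[k]_n -> {ffun 'I_p -> W}) (F : W -> 'rV[k]_p -> X) :
  (forall y, lin (F^~ y)) ->
  lift (lift t G) F = lift t (fun x y => lift (G x y) F).
Proof.
move=> hF; rewrite {1}/lift.
under eq_bigr => i _ do rewrite /lift sum_ffunE (lin_sum _ _ _ (hF _)).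
by rewrite exchange_big.
Qed.

Lemma lin_tens_l V n (h : 'rV[k]_n) : lin (fun v : V => tens v h).
Proof. by move=> a x y; apply/ffunP => j; rewrite !ffunE scalerDr !scalerA mulrC. Qed.

Lemma lin_tens_r V n (v : V) : lin (fun h : 'rV[k]_n => tens v h).
Proof. by move=> a x y; apply/ffunP => j; rewrite !ffunE !mxE scalerDl scalerA. Qed.

Lemma bilin_tens_comp V W n (f : V -> W) (g : 'rV[k]_n -> 'rV[k]_n) :
  lin f -> lin g -> bilin (fun x y => tens (f x) (g y)).
Proof.
move=> hf hg; split => [x|y].
  exact: (lin_comp (f := tens (f x)) (lin_tens_r _) hg).
exact: (lin_comp (f := fun v => tens v (g y)) (lin_tens_l _) hf).
Qed.

Lemma lift_tens V W n (v : V) (h : 'rV[k]_n) (F : V -> 'rV[k]_n -> W) :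
  bilin F -> lift (tens v h) F = F v h.
Proof.
move=> [h2 h1]; rewrite /lift -(lin_sum_ev h (h2 v)).
by apply: eq_bigr => j _; rewrite ffunE (linZ (h1 _)).
Qed.

Lemma lift_tens_lin V W X n p (t : {ffun 'I_n -> V}) (F : V -> 'rV[k]_n -> W)
    (g : W -> 'rV[k]_p) (Y : X) :
  lin g -> tens Y (g (lift t F)) = lift t (fun x y => tens Y (g (F x y))).
Proof. by move=> hg; exact: (lift_lin t F (lin_comp (f := tens Y) (lin_tens_r _) hg)). Qed.

End SweedlerSums.

Section Equivariance.
Variables (k : fieldType) (m n : nat).
Variable Phi : 'rV[k]_n -> 'rV[k]_m -> {ffun 'I_n -> 'rV[k]_m}.

Definition equivariant (fA : 'rV[k]_m -> 'rV[k]_m) (fH : 'rV[k]_n -> 'rV[k]_n) :=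
  forall h a, Phi (fH h) (fA a) = lift (Phi h a) (fun a' h' => tens (fA a') (fH h')).

Lemma equivariant_iter fA fH p :
  lin fA -> lin fH -> equivariant fA fH -> equivariant (iter p fA) (iter p fH).
Proof.
move=> hA hH C; elim: p => [|p IH] h a /=; first by rewrite lift_tens_id.
have bf := bilin_tens_comp hA hH.
rewrite C IH lift_lift; last exact: bf.2.
by apply: eq_lift => x y; rewrite (lift_tens _ _ bf).
Qed.

Variables (fA gA : 'rV[k]_m -> 'rV[k]_m) (fH gH : 'rV[k]_n -> 'rV[k]_n).
Hypotheses (hA : lin fA) (hH : lin fH).
Hypotheses (fAK : cancel fA gA) (gAK : cancel gA fA).
Hypotheses (fHK : cancel fH gH) (gHK : cancel gH fH).

Lemma equivariant_inv : equivariant fA fH -> equivariant gA gH.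
Proof.
move=> C h a.
have bg := bilin_tens_comp (lin_inv hA fAK gAK) (lin_inv hH fHK gHK).
rewrite -{2}[h]gHK -{2}[a]gAK C lift_lift; last exact: bg.2.
rewrite -[LHS]lift_tens_id; apply: eq_lift => x y.
by rewrite (lift_tens _ _ bg) fAK fHK.
Qed.

Lemma equivariant_zit t : equivariant fA fH -> equivariant (zit fA gA t) (zit fH gH t).
Proof.
move=> C; case: t => p /=; first exact: equivariant_iter.
apply: (equivariant_iter p.+1 (lin_inv hA fAK gAK) (lin_inv hH fHK gHK)).
exact: equivariant_inv.
Qed.

End Equivariance.

Lemma entwining_equivariant (k : fieldType) m n mulA oneA (alA : 'rV[k]_m -> 'rV[k]_m)
    DeltaH epsH (alH : 'rV[k]_n -> 'rV[k]_n) Phi :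
  isHomEntwining mulA oneA alA DeltaH epsH alH Phi -> equivariant Phi alA alH.
Proof. by case=> _ [E1 _ _ _ _] h a; rewrite E1. Qed.

Section DualPowers.
Variables (k : fieldType) (m : nat) (al alinv : 'rV[k]_m -> 'rV[k]_m).
Hypotheses (hal : lin al) (aK : cancel al alinv) (aiK : cancel alinv al).

Lemma pair_alB f a : pair (alB alinv f) a = pair f (alinv a).
Proof. exact: pair_row_linf (linf_comp (linf_pair f) (lin_inv hal aK aiK)). Qed.

Lemma pair_alBinv f a : pair (alBinv al f) a = pair f (al a).
Proof. exact: pair_row_linf (linf_comp (linf_pair f) hal). Qed.

Lemma pair_iter_adjoint (F G : 'rV[k]_m -> 'rV[k]_m) p :
  (forall f a, pair (F f) a = pair f (G a)) ->
  forall f a, pair (iter p F f) a = pair f (iter p G a).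
Proof. by move=> e; elim: p => //= p IH f a; rewrite e IH -iterS iterSr. Qed.

Lemma pair_zit t f a :
  pair (zit (alB alinv) (alBinv al) t f) a = pair f (zit alinv al t a).
Proof.
by case: t => p; apply: pair_iter_adjoint => g b; [apply: pair_alB | apply: pair_alBinv].
Qed.

End DualPowers.

Section ModulesAsComodules.
Variables (k : fieldType) (m : nat).
Implicit Types U V W : lmodType k.

Definition contract V (a : 'rV[k]_m) (T : {ffun 'I_m -> V}) : V :=
  \sum_(i < m) a 0 i *: T i.

Definition coact_of_act U (act : U -> 'rV[k]_m -> U) (u : U) : {ffun 'I_m -> U} :=
  [ffun j => act u (ev k j)].

Definition act_of_coact U (rho : U -> {ffun 'I_m -> U}) (u : U) (a : 'rV[k]_m) : U :=
  contract a (rho u).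

Lemma lin_contract V (a : 'rV[k]_m) : lin (@contract V a).
Proof.
move=> c x y; rewrite /contract scaler_sumr -big_split /=; apply: eq_bigr => i _.
by rewrite !ffunE scalerDr !scalerA mulrC.
Qed.

Lemma contract_tens V (a b : 'rV[k]_m) (x : V) : contract a (tens x b) = pair b a *: x.
Proof.
rewrite /contract /pair scaler_suml; apply: eq_bigr => i _.
by rewrite ffunE scalerA mulrC.
Qed.

Lemma contract_ev V i (T : {ffun 'I_m -> V}) : contract (ev k i) T = T i.
Proof. exact: sum_evE. Qed.

Lemma lift_coact U W (act : U -> 'rV[k]_m -> U) u (F : U -> 'rV[k]_m -> W) :
  lift (coact_of_act act u) F = \sum_(j < m) F (act u (ev k j)) (ev k j).
Proof. by apply: eq_bigr => j _; rewrite ffunE. Qed.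

Lemma lin_coact_of_act U (act : U -> 'rV[k]_m -> U) : bilin act -> lin (coact_of_act act).
Proof. by case=> _ h2 c x y; apply/ffunP => j; rewrite !ffunE h2. Qed.

Lemma bilin_act_of_coact U (rho : U -> {ffun 'I_m -> U}) : lin rho -> bilin (act_of_coact rho).
Proof.
move=> h; split => [x|y] c a b; rewrite /act_of_coact /contract.
  rewrite scaler_sumr -big_split; apply: eq_bigr => j _ /=.
  by rewrite !mxE scalerDl scalerA.
rewrite scaler_sumr -big_split; apply: eq_bigr => j _ /=.
by rewrite h !ffunE scalerDr !scalerA mulrC.
Qed.

Lemma act_of_coactK U (rho : U -> {ffun 'I_m -> U}) : coact_of_act (act_of_coact rho) = rho.
Proof.
apply: FunctionalExtensionality.functional_extensionality => u; apply/ffunP => i.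
by rewrite ffunE /act_of_coact contract_ev.
Qed.

Lemma coact_of_actK U (act : U -> 'rV[k]_m -> U) :
  bilin act -> act_of_coact (coact_of_act act) = act.
Proof.
case=> h1 _; apply: FunctionalExtensionality.functional_extensionality => u.
apply: FunctionalExtensionality.functional_extensionality => a.
rewrite /act_of_coact /contract; under eq_bigr do rewrite ffunE.
exact: lin_sum_ev (h1 u).
Qed.

Lemma act_hom_colinear U V (actU : U -> 'rV[k]_m -> U) (actV : V -> 'rV[k]_m -> V)
    (f : U -> V) :
  lin f -> bilin actU -> bilin actV ->
  (forall u a, f (actU u a) = actV (f u) a) <->
  colinear (coact_of_act actU) (coact_of_act actV) f.
Proof.
move=> hf [hU _] [hV _]; split => [E u | E u a].
  by rewrite lift_tens_f; apply/ffunP => i; rewrite !ffunE E.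
have := congr1 (contract a) (E u); rewrite lift_tens_f /contract.
under eq_bigr do rewrite ffunE.
under [in X in _ = X -> _]eq_bigr do rewrite !ffunE.
by rewrite (lin_sum_ev _ (hV _)) (lin_sum_ev _ (lin_comp hf (hU u))).
Qed.

Lemma alB_ev_coord (alinv : 'rV[k]_m -> 'rV[k]_m) j i :
  alB alinv (ev k j) 0 i = alinv (ev k i) 0 j.
Proof. by rewrite mxE pair_evl. Qed.

Section CoactionCoordinates.
Variables (U : lmodType k) (act : U -> 'rV[k]_m -> U) (alU : U -> U).
Variables (mul : 'rV[k]_m -> 'rV[k]_m -> 'rV[k]_m) (alinv : 'rV[k]_m -> 'rV[k]_m).
Hypotheses (hact : bilin act) (hU : lin alU).

Lemma lift_coact_alB u i :
  lift (coact_of_act act u) (fun u0 u1 => tens (alU u0) (alB alinv u1)) i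
  = alU (act u (alinv (ev k i))).
Proof.
rewrite lift_ffunE lift_coact.
under eq_bigr do rewrite tensE alB_ev_coord.
exact: lin_sum_ev (lin_comp hU (hact.1 u)).
Qed.

Lemma lift_coact_DeltaB u i2 i1 :
  lift (coact_of_act act u) (fun u0 u1 =>
      lift (DeltaB mul alinv u1) (fun d1 d2 => tens (tens (alU u0) d1) d2)) i2 i1
  = alU (act u (alinv (alinv (mul (ev k i2) (ev k i1))))).
Proof.
rewrite lift_ffunE.
under eq_lift do rewrite lift_ffunE.
under eq_lift do (under eq_lift do rewrite tensE); under eq_lift do rewrite lift_coord.
rewrite lift_ffunE lift_coact.
under eq_bigr do rewrite tensE ffunE mxE pair_evl.
exact: lin_sum_ev (lin_comp hU (hact.1 u)).
Qed.

Lemma lift_coact_coact u i2 i1 :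
  lift (coact_of_act act u) (fun u0 u1 => tens (coact_of_act act u0) (alB alinv u1)) i2 i1
  = act (act u (alinv (ev k i2))) (ev k i1).
Proof.
rewrite lift_ffunE lift_coact.
under eq_bigr do rewrite tensE alB_ev_coord.
by rewrite (lin_sum_ev _ (lin_comp (lin_coact_of_act hact) (hact.1 u))) ffunE.
Qed.

Lemma lift_coact_epsB (one : 'rV[k]_m) u :
  lift (coact_of_act act u) (fun u0 u1 => epsB one u1 *: u0) = act u one.
Proof.
rewrite lift_coact; under eq_bigr do rewrite /epsB pair_evl.
exact: lin_sum_ev (hact.1 u).
Qed.

End CoactionCoordinates.

Lemma alM (mul : 'rV[k]_m -> 'rV[k]_m -> 'rV[k]_m) one al alinv :
  isHomAlgebra mul one al alinv -> forall a b, al (mul a b) = mul (al a) (al b).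
Proof.
case=> _ _ _ _ [ass a1 u] a b.
by have := ass one a b; rewrite a1 (u (mul a b)).1 (u a).1.
Qed.

Lemma alinvM (mul : 'rV[k]_m -> 'rV[k]_m -> 'rV[k]_m) one al alinv :
  isHomAlgebra mul one al alinv -> forall a b, alinv (mul a b) = mul (alinv a) (alinv b).
Proof.
move=> H a b; have [_ _ aK aiK _] := H.
by apply: (can_inj aK); rewrite (alM H) !aiK.
Qed.

End ModulesAsComodules.

Lemma HomModule_iff_HomComodule (k : fieldType) m (mul : 'rV[k]_m -> 'rV[k]_m -> 'rV[k]_m)
    one al alinv (U : lmodType k) (alU : U -> U) (act : U -> 'rV[k]_m -> U) :
  isHomAlgebra mul one al alinv -> bilin act -> lin alU ->
  isHomModule mul one al alU act <->
  isHomComodule (DeltaB mul alinv) (epsB one) (alB alinv) alU (coact_of_act act).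
Proof.
move=> HA hb hU; have [[m1 m2] hal aK aiK _] := HA.
have hi := lin_inv hal aK aiK; have [h1 h2] := hb.
split.
  case=> _ hal2 hass hone; split.
  - exact: lin_coact_of_act.
  - by move=> u; apply/ffunP => i; rewrite lift_coact_alB // ffunE hal2 aiK.
  - move=> u; apply/ffunP => i2; apply/ffunP => i1.
    rewrite lift_coact_DeltaB // lift_coact_coact //.
    by rewrite hal2 aiK -[ev k i1 in RHS]aiK hass (alinvM HA).
  - by move=> u; rewrite lift_coact_epsB.
case=> _ coactU coassoc counit.
have hal2 u a : alU (act u a) = act (alU u) (al a).
  have E : act (alU u) =1 fun x => alU (act u (alinv x)).
    apply: lin_eq_ev => [||i]; first exact: h1.
      exact: lin_comp hU (lin_comp (h1 u) hi).
    have := congr1 (fun t : {ffun 'I_m -> U} => t i) (coactU u).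
    by rewrite /= lift_coact_alB // ffunE.
  by rewrite E aK.
have hass u x y : alU (act u (alinv (alinv (mul x y)))) = act (act u (alinv x)) y.
  apply: (bilin_eq_ev (g1 := fun x y => alU (act u (alinv (alinv (mul x y)))))
                      (g2 := fun x y => act (act u (alinv x)) y)).
  - split => [x'|y'].
      exact: lin_comp hU (lin_comp (h1 u) (lin_comp hi (lin_comp hi (m1 _)))).
    exact: lin_comp hU (lin_comp (h1 u) (lin_comp hi (lin_comp hi (m2 _)))).
  - by split => [x'|y']; [apply: h1 | apply: lin_comp (h2 _) (lin_comp (h1 u) hi)].
  move=> i2 i1.
  have := congr1 (fun t : {ffun 'I_m -> {ffun 'I_m -> U}} => t i2 i1) (coassoc u).
  by rewrite /= lift_coact_DeltaB // lift_coact_coact.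
split => //.
- by move=> u a b; rewrite -{1}[a]aK -hass -(alM HA) aK hal2 aiK.
- by move=> u; rewrite -(lift_coact_epsB hb) counit.
Qed.

Section CotwistorCompatibility.
Variables (k : fieldType) (m n : nat).
Variables (alA alAinv : 'rV[k]_m -> 'rV[k]_m) (alH alHinv : 'rV[k]_n -> 'rV[k]_n).
Variables (Phi : 'rV[k]_n -> 'rV[k]_m -> {ffun 'I_n -> 'rV[k]_m})
  (phi : 'rV[k]_m -> 'rV[k]_n -> {ffun 'I_m -> 'rV[k]_n}) (z : int).
Hypotheses (hA : lin alA) (aK : cancel alA alAinv) (aiK : cancel alAinv alA).
Hypotheses (hH : lin alH) (hK : cancel alH alHinv) (hiK : cancel alHinv alH).
Hypotheses (eqPhi : equivariant Phi alA alH) (cot : corresponding_cotwistor Phi phi).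

Local Notation alBz := (zit (alB alAinv) (alBinv alA)).
Local Notation alHz := (zit alH alHinv).

(* Dualising moves alB^z onto a as alA^-z; after the cotwistor identity,
   equivariance of Phi under alA^z, alH^z removes that power again. *)
Lemma cotwistor_zit f a h :
  lift (phi (alBz (- z - 1) f) (alH h)) (fun h' b' => pair (alBz z b') a *: h')
  = alHz (- z) (lift (Phi (alHz (z + 1) h) a) (fun a' h' => pair f (alA a') *: h')).
Proof.
have lHz := lin_zit (- z) hH (lin_inv hH hK hiK).
have bF : bilin (fun (x : 'rV[k]_m) (y : 'rV[k]_n) => pair f (alA x) *: y).
  split => [x c y1 y2|y c x1 x2]; first by rewrite scalerDr !scalerA mulrC.
  by rewrite hA linf_pair scalerDl scalerA.
under eq_lift do rewrite (pair_zit hA aK aiK).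
rewrite -cot.
under eq_lift do rewrite (pair_zit hA aK aiK) -opprD zitN zitS //.
rewrite zitSr // -{2}[a](zitK aiK aK z).
rewrite (equivariant_zit hA hH aK aiK hK hiK z eqPhi).
rewrite lift_lift; last exact: bF.2.
rewrite (lift_lin _ _ lHz); apply: eq_lift => x y.
rewrite (lift_tens _ _ bF) (linZ lHz) zitN zitK //.
Qed.

Variables (U : lmodType k) (act : U -> 'rV[k]_m -> U) (rho : U -> {ffun 'I_n -> U}).
Hypotheses (hact : forall u, lin (act u)) (hrho : lin rho).

Lemma contract_twisted_coact w h a :
  contract a (lift (coact_of_act act w) (fun u00 b =>
     lift (phi (alBz (- z - 1) b) (alH h)) (fun h' b' =>
        tens (tens u00 h') (alBz z b'))))
  = lift (Phi (alHz (z + 1) h) a) (fun a' h' => tens (act w (alA a')) (alHz (- z) h')).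
Proof.
have lHz := lin_zit (- z) hH (lin_inv hH hK hiK).
rewrite (lift_lin _ _ (lin_contract a)).
under eq_lift do rewrite (lift_lin _ _ (lin_contract _)).
under eq_lift do (under eq_lift do rewrite contract_tens -(linZ (lin_tens_r _))).
under eq_lift do rewrite -(lift_lin _ _ (lin_tens_r _)) cotwistor_zit (lift_tens_lin _ _ _ lHz).
rewrite lift_coact exchange_big; apply: eq_bigr => j _.
under eq_bigr do rewrite (linZ lHz) (linZ (lin_tens_r _)) pair_evl.
exact: (lin_sum_ev _ (lin_comp (f := fun v => tens v (alHz (- z) (ev k j)))
                               (lin_tens_l _) (hact w))).
Qed.

Lemma entwined_iff_bicomodule_compat :
  (forall u a, rho (act u a)
     = lift (rho u) (fun u0 u1 =>
         lift (Phi (alHz (z + 1) u1) a) (fun a' h' =>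
           tens (act u0 (alA a')) (alHz (- z) h'))))
  <->
  (forall u,
     lift (coact_of_act act u) (fun x b => tens (rho x) b)
     = lift (rho u) (fun u0 u1 =>
         lift (coact_of_act act u0) (fun u00 b =>
           lift (phi (alBz (- z - 1) b) (alH u1)) (fun h' b' =>
             tens (tens u00 h') (alBz z b'))))).
Proof.
pose RB u := lift (rho u) (fun u0 u1 =>
         lift (coact_of_act act u0) (fun u00 b =>
           lift (phi (alBz (- z - 1) b) (alH u1)) (fun h' b' =>
             tens (tens u00 h') (alBz z b')))).
have contract_RB u a : contract a (RB u) = lift (rho u) (fun u0 u1 =>
         lift (Phi (alHz (z + 1) u1) a) (fun a' h' =>
           tens (act u0 (alA a')) (alHz (- z) h'))).
  by rewrite (lift_lin _ _ (lin_contract a)); apply: eq_lift => x y;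
     apply: contract_twisted_coact.
split => [E u | E u a].
  rewrite -/(RB u) lift_tens_f; apply/ffunP => i.
  by rewrite !ffunE E -contract_RB contract_ev.
rewrite -contract_RB /RB -E lift_tens_f /contract; under eq_bigr do rewrite !ffunE.
by rewrite (lin_sum_ev a (lin_comp hrho (hact u))).
Qed.

End CotwistorCompatibility.

Lemma castf_transport (C : ccat) (X X' Y Y' : C) (eX : X' = X) (eY : Y' = Y)
    (g : ccar X' -> ccar Y') (f : ccar X -> ccar Y)
    (hX : ccar X' = ccar X) (hY : ccar Y' = ccar Y) :
  (forall x, eq_rect _ id (g x) _ hY = f (eq_rect _ id x _ hX)) -> castf eX eY g =1 f.
Proof.
subst X Y => E x.
rewrite (ProofIrrelevance.proof_irrelevance _ hX erefl) in E.
rewrite (ProofIrrelevance.proof_irrelevance _ hY erefl) in E.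
exact: E.
Qed.

Lemma inverse_functors_transport (C D : ccat) (F : cfunctor C D) (G : cfunctor D C)
    (e : forall X, fob G (fob F X) = X) (hcar : forall X, ccar (fob G (fob F X)) = ccar X) :
  (forall X Y (f : ccar X -> ccar Y) (hf : chom f) x,
     eq_rect _ id (fmap G (fmap_hom F hf) x) _ (hcar Y) = f (eq_rect _ id x _ (hcar X))) ->
  inverse_functors F G.
Proof. by move=> E; exists e => X Y f hf; apply: castf_transport (E X Y f hf). Qed.

Arguments em_U {k m n mulA oneA alA DeltaH epsH alH alHinv Phi z} _ : rename.
Arguments em_al {k m n mulA oneA alA DeltaH epsH alH alHinv Phi z} _ : rename.
Arguments em_act {k m n mulA oneA alA DeltaH epsH alH alHinv Phi z} _ : rename.
Arguments em_rho {k m n mulA oneA alA DeltaH epsH alH alHinv Phi z} _ : rename.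
Arguments em_ax {k m n mulA oneA alA DeltaH epsH alH alHinv Phi z} _ : rename.
Arguments bc_U {k m n mulA oneA alA alAinv DeltaH epsH alH phi z} _ : rename.
Arguments bc_al {k m n mulA oneA alA alAinv DeltaH epsH alH phi z} _ : rename.
Arguments bc_rhoB {k m n mulA oneA alA alAinv DeltaH epsH alH phi z} _ : rename.
Arguments bc_rho {k m n mulA oneA alA alAinv DeltaH epsH alH phi z} _ : rename.
Arguments bc_ax {k m n mulA oneA alA alAinv DeltaH epsH alH phi z} _ : rename.

Section EntwinedModulesAsBicomodules.
Variables (k : fieldType) (m n : nat).
Variables (mulA : 'rV[k]_m -> 'rV[k]_m -> 'rV[k]_m) (oneA : 'rV[k]_m)
  (alA alAinv : 'rV[k]_m -> 'rV[k]_m).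
Variables (DeltaH : 'rV[k]_n -> {ffun 'I_n -> 'rV[k]_n}) (epsH : 'rV[k]_n -> k)
  (alH alHinv : 'rV[k]_n -> 'rV[k]_n).
Variables (Phi : 'rV[k]_n -> 'rV[k]_m -> {ffun 'I_n -> 'rV[k]_m})
  (phi : 'rV[k]_m -> 'rV[k]_n -> {ffun 'I_m -> 'rV[k]_n}) (z : int).
Hypotheses (HA : isHomAlgebra mulA oneA alA alAinv)
  (HC : isHomCoalgebra DeltaH epsH alH alHinv)
  (HE : isHomEntwining mulA oneA alA DeltaH epsH alH Phi)
  (cot : corresponding_cotwistor Phi phi).

Local Notation emod := (EMod k m n mulA oneA alA DeltaH epsH alH alHinv Phi z).
Local Notation bicom := (BiCom k m n mulA oneA alA alAinv DeltaH epsH alH phi z).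
Local Notation EC := (EModCat mulA oneA alA DeltaH epsH alH alHinv Phi z).
Local Notation BC := (BiComCat mulA oneA alA alAinv DeltaH epsH alH phi z).

Lemma em_act_bilin (X : emod) : bilin (em_act X).
Proof. by have [_ _ []] := em_ax X. Qed.

Lemma bc_act_bilin (Y : bicom) : bilin (act_of_coact (bc_rhoB Y)).
Proof. by apply: bilin_act_of_coact; have [_ _ []] := bc_ax Y. Qed.

Definition bicom_of_emod (X : emod) : bicom.
Proof.
refine (@Build_BiCom k m n mulA oneA alA alAinv DeltaH epsH alH phi z
          (em_U X) (em_al X) (coact_of_act (em_act X)) (em_rho X) _).
have [hal hbij hmod hcom hcompat] := em_ax X; have [hrho _ _ _] := hcom.
have [_ hA aK aiK _] := HA; have [[_ _ hH hK hiK] _] := HC.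
split => //; first exact/(HomModule_iff_HomComodule HA (em_act_bilin X) hal).
exact: (entwined_iff_bicomodule_compat z hA aK aiK hH hK hiK
         (entwining_equivariant HE) cot (em_act_bilin X).1 hrho).1.
Defined.

Definition emod_of_bicom (Y : bicom) : emod.
Proof.
refine (@Build_EMod k m n mulA oneA alA DeltaH epsH alH alHinv Phi z
          (bc_U Y) (bc_al Y) (act_of_coact (bc_rhoB Y)) (bc_rho Y) _).
have [hal hbij hcomB hcom hcompat] := bc_ax Y; have [hrho _ _ _] := hcom.
have [_ hA aK aiK _] := HA; have [[_ _ hH hK hiK] _] := HC.
split => //.
  by apply/(HomModule_iff_HomComodule HA (bc_act_bilin Y) hal); rewrite act_of_coactK.
apply: (entwined_iff_bicomodule_compat z hA aK aiK hH hK hiK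
         (entwining_equivariant HE) cot (bc_act_bilin Y).1 hrho).2.
by rewrite act_of_coactK.
Defined.

Lemma EMod_eta (X : emod) act pf :
  act = em_act X ->
  @Build_EMod k m n mulA oneA alA DeltaH epsH alH alHinv Phi z
    (em_U X) (em_al X) act (em_rho X) pf = X.
Proof.
case: X act pf => /= U al act0 rho ax act pf E; subst act; congr Build_EMod.
exact: ProofIrrelevance.proof_irrelevance.
Qed.

Lemma BiCom_eta (Y : bicom) rhoB pf :
  rhoB = bc_rhoB Y ->
  @Build_BiCom k m n mulA oneA alA alAinv DeltaH epsH alH phi z
    (bc_U Y) (bc_al Y) rhoB (bc_rho Y) pf = Y.
Proof.
case: Y rhoB pf => /= U al rhoB0 rho ax rhoB pf E; subst rhoB; congr Build_BiCom.
exact: ProofIrrelevance.proof_irrelevance.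
Qed.

Lemma bicom_of_emodK (X : emod) : emod_of_bicom (bicom_of_emod X) = X.
Proof. by apply: EMod_eta; apply: coact_of_actK; apply: em_act_bilin. Qed.

Lemma emod_of_bicomK (Y : bicom) : bicom_of_emod (emod_of_bicom Y) = Y.
Proof. by apply: BiCom_eta; apply: act_of_coactK. Qed.

Lemma bicom_of_emod_hom (X Y : emod) (f : em_U X -> em_U Y) :
  @chom EC X Y f -> @chom BC (bicom_of_emod X) (bicom_of_emod Y) f.
Proof.
case=> hl hal hact hcol; split => //.
exact: (act_hom_colinear hl (em_act_bilin X) (em_act_bilin Y)).1 hact.
Qed.

Lemma emod_of_bicom_hom (X Y : bicom) (f : bc_U X -> bc_U Y) :
  @chom BC X Y f -> @chom EC (emod_of_bicom X) (emod_of_bicom Y) f.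
Proof.
case=> hl hal hcolB hcol; split => //.
apply: (act_hom_colinear hl (bc_act_bilin X) (bc_act_bilin Y)).2.
by rewrite !act_of_coactK.
Qed.

Definition emod_to_bicom : cfunctor EC BC :=
  @CFunctor EC BC bicom_of_emod (fun X Y f _ => f) bicom_of_emod_hom
    (fun _ _ _ => erefl) (fun _ _ _ _ _ _ _ _ _ => erefl).

Definition bicom_to_emod : cfunctor BC EC :=
  @CFunctor BC EC emod_of_bicom (fun X Y f _ => f) emod_of_bicom_hom
    (fun _ _ _ => erefl) (fun _ _ _ _ _ _ _ _ _ => erefl).

Lemma emod_to_bicomK : inverse_functors emod_to_bicom bicom_to_emod.
Proof.
exact: (@inverse_functors_transport _ _ emod_to_bicom bicom_to_emod bicom_of_emodK
          (fun _ => erefl) (fun _ _ _ _ _ => erefl)).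
Qed.

Lemma bicom_to_emodK : inverse_functors bicom_to_emod emod_to_bicom.
Proof.
exact: (@inverse_functors_transport _ _ bicom_to_emod emod_to_bicom emod_of_bicomK
          (fun _ => erefl) (fun _ _ _ _ _ => erefl)).
Qed.

End EntwinedModulesAsBicomodules.

Theorem proposition5p5 (k : fieldType) (char0 : [pchar k] =i pred0)
  (m n : nat)
  (mulA : 'rV[k]_m -> 'rV[k]_m -> 'rV[k]_m) (oneA : 'rV[k]_m)
  (alA alAinv : 'rV[k]_m -> 'rV[k]_m)
  (DeltaH : 'rV[k]_n -> {ffun 'I_n -> 'rV[k]_n}) (epsH : 'rV[k]_n -> k)
  (alH alHinv : 'rV[k]_n -> 'rV[k]_n)
  (Phi : 'rV[k]_n -> 'rV[k]_m -> {ffun 'I_n -> 'rV[k]_m})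
  (phi : 'rV[k]_m -> 'rV[k]_n -> {ffun 'I_m -> 'rV[k]_n})
  (z : int) :
  isHomAlgebra mulA oneA alA alAinv ->
  isHomCoalgebra DeltaH epsH alH alHinv ->
  isHomEntwining mulA oneA alA DeltaH epsH alH Phi ->
  corresponding_cotwistor Phi phi ->
  cat_iso (EModCat mulA oneA alA DeltaH epsH alH alHinv Phi z)
          (BiComCat mulA oneA alA alAinv DeltaH epsH alH phi z).
Proof.
move=> HA HC HE cot.
exists (emod_to_bicom z HA HC HE cot), (bicom_to_emod z HA HC HE cot).
by split; [apply: emod_to_bicomK | apply: bicom_to_emodK].
Qed.
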